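(* Let $X, B_1, \dots, B_n$ be $d\times d$ symmetric positive definite matrices and let $\phi(\alpha) := \delta_R^2\big(\sum_{i=1}^n \alpha_i B_i, X\big)$ for $\alpha \in \mathbb{R}^n$. Then $\phi$ is convex on the set $$\mathcal{A} := \Big\{\alpha \in \mathbb{R}^n \;\Big|\; \sum_{i=1}^n \alpha_i B_i \preceq X \text{ and } \alpha \ge 0\Big\}.$$
   Context: For symmetric positive definite $X, Y$, $\delta_R(X,Y) = \|\log(X^{-1/2} Y X^{-1/2})\|_F$ with $\log$ the principal matrix logarithm and $\|\cdot\|_F$ the Frobenius norm; $\phi(\alpha)$ is defined when $\sum_i \alpha_i B_i$ is positive definite. $\preceq$ denotes the Löwner order ($A \preceq B$ iff $B - A$ is positive semidefinite), and $\alpha \ge 0$ means entrywise nonnegativity. *)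

From HB Require Import structures.
From mathcomp Require Import all_boot all_order all_algebra.
From mathcomp Require Import all_classical all_reals all_analysis.
From Stdlib Require Import ClassicalEpsilon.
Set Implicit Arguments. Unset Strict Implicit. Unset Printing Implicit Defensive.
Import Order.TTheory GRing.Theory Num.Theory.
Local Open Scope ring_scope.

Section Defs.
Variable R : realType.

Definition symmetric_mx (d : nat) (M : 'M[R]_d) : Prop := M^T = M.

Definition spd (d : nat) (M : 'M[R]_d) : Prop :=
  symmetric_mx M /\ forall x : 'cV[R]_d, x != 0 -> 0 < (x^T *m M *m x) 0 0.

Definition psd (d : nat) (M : 'M[R]_d) : Prop :=
  symmetric_mx M /\ forall x : 'cV[R]_d, 0 <= (x^T *m M *m x) 0 0.

Definition loewner_le (d : nat) (A B : 'M[R]_d) : Prop := psd (B - A).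

Definition spec_dec (d : nat) (M : 'M[R]_d) (p : 'M[R]_d * 'rV[R]_d) : Prop :=
  p.1 *m p.1^T = 1%:M /\ M = p.1 *m diag_mx p.2 *m p.1^T.

(* spectral functional calculus f(M) := Q diag(f v) Q^T for a symmetric M
   (meaningful when M admits an orthogonal diagonalization, e.g. M symmetric) *)
Definition mx_fun (d : nat) (f : R -> R) (M : 'M[R]_d) : 'M[R]_d :=
  let p := epsilon (inhabits (1%:M, 0)) (spec_dec M) in
  p.1 *m diag_mx (map_mx f p.2) *m p.1^T.

Definition logm (d : nat) (M : 'M[R]_d) : 'M[R]_d := mx_fun (@ln R) M.

Definition invsqrtm (d : nat) (M : 'M[R]_d) : 'M[R]_d :=
  mx_fun (fun x => (Num.sqrt x)^-1) M.

Definition frob (d : nat) (M : 'M[R]_d) : R :=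
  Num.sqrt (\sum_(i < d) \sum_(j < d) M i j ^+ 2).

Definition deltaR (d : nat) (X Y : 'M[R]_d) : R :=
  frob (logm (invsqrtm X *m Y *m invsqrtm X)).

Definition wsum (d n : nat) (B : 'I_n -> 'M[R]_d) (alpha : 'rV[R]_n) : 'M[R]_d :=
  \sum_(i < n) alpha 0 i *: B i.

Definition phi (d n : nat) (B : 'I_n -> 'M[R]_d) (X : 'M[R]_d) (alpha : 'rV[R]_n) : R :=
  deltaR (wsum B alpha) X ^+ 2.

(* the set A, intersected with the domain of phi (sum alpha_i B_i positive definite) *)
Definition setA (d n : nat) (B : 'I_n -> 'M[R]_d) (X : 'M[R]_d) (alpha : 'rV[R]_n) : Prop :=
  loewner_le (wsum B alpha) X /\ (forall i, 0 <= alpha 0 i) /\ spd (wsum B alpha).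

End Defs.

(* On the set A the matrix Y := X^{-1/2} W X^{-1/2}, W := sum_i alpha_i B_i,
   depends affinely on alpha and lies in the operator interval 0 < Y <= I.
   The eigenvalues of W^{-1/2} X W^{-1/2} are the reciprocals of those of Y,
   so phi(alpha) = sum_j ln^2 (lambda_j (Y)).  On (0, 1] the function ln^2 is
   convex (ln is concave and nonpositive there), and a spectral sum of a convex
   function is convex: diagonalising the convex combination Y_t by an
   orthogonal Q, its eigenvalues are the convex combinations of the diagonal
   entries of Q^T Y_alpha Q and Q^T Y_beta Q, and the sum of ln^2 over the
   diagonal of Q^T Y Q is at most the sum over the spectrum of Y (Peierls). *)

From HB Require Import structures.
From mathcomp Require Import all_boot all_order all_algebra.
From mathcomp Require Import all_classical all_reals all_analysis.
From mathcomp Require Import complex ring lra.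
From Stdlib Require Import ClassicalEpsilon.
Import Order.TTheory GRing.Theory Num.Theory.
Local Open Scope ring_scope.
Set Implicit Arguments. Unset Strict Implicit. Unset Printing Implicit Defensive.

Lemma mulmx_trmx_ge0 (R : realDomainType) n (h : 'rV[R]_n) : 0 <= (h *m h^T) 0 0.
Proof. by rewrite mxE; apply: sumr_ge0 => j _; rewrite mxE -expr2 sqr_ge0. Qed.

Lemma mulmx_trmx_eq0 (R : realDomainType) n (h : 'rV[R]_n) : (h *m h^T) 0 0 = 0 -> h = 0.
Proof.
rewrite mxE => /psumr_eq0P h0; apply/rowP => j; rewrite mxE; apply/eqP.
have hT i : h^T i 0 = h 0 i by rewrite mxE.
rewrite -sqrf_eq0 expr2 -{2}hT; apply/eqP/h0 => // i _.
by rewrite hT -expr2 sqr_ge0.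
Qed.

Section OrthogonalMatrices.
Variables (R : realFieldType) (n : nat).
Implicit Types (P Q : 'M[R]_n) (a b : 'rV[R]_n).

Lemma orthmx_sqr_row_sum Q k : Q *m Q^T = 1%:M -> \sum_j Q k j ^+ 2 = 1.
Proof.
move/matrixP/(_ k k); rewrite !mxE eqxx mulr1n => <-.
by apply: eq_bigr => j _; rewrite mxE expr2.
Qed.

Lemma orthmx_sqr_col_sum Q j : Q *m Q^T = 1%:M -> \sum_k Q k j ^+ 2 = 1.
Proof.
move/mulmx1C/matrixP/(_ j j); rewrite !mxE eqxx mulr1n => <-.
by apply: eq_bigr => k _; rewrite mxE expr2.
Qed.

Lemma trmx_conj_diag P a : (P *m diag_mx a *m P^T)^T = P *m diag_mx a *m P^T.
Proof. by rewrite !trmx_mul trmxK tr_diag_mx mulmxA. Qed.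

Lemma mul_conj_diag P a b : P^T *m P = 1%:M ->
  P *m diag_mx a *m P^T *m (P *m diag_mx b *m P^T)
  = P *m diag_mx (\row_j (a 0 j * b 0 j)) *m P^T.
Proof.
move=> PtP; rewrite !mulmxA -(mulmxA _ P^T) PtP mulmx1 -(mulmxA _ (diag_mx a)).
by rewrite mulmx_diag.
Qed.

Lemma conj_diag_const P c : P *m P^T = 1%:M ->
  P *m diag_mx (const_mx c) *m P^T = c%:M.
Proof. by move=> PPt; rewrite diag_const_mx mul_mx_scalar -scalemxAl PPt scale_scalar_mx mulr1. Qed.

Lemma conj_diagK P a : P^T *m P = 1%:M -> P^T *m (P *m diag_mx a *m P^T) *m P = diag_mx a.
Proof. by move=> PtP; rewrite !mulmxA PtP mul1mx -mulmxA PtP mulmx1. Qed.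

Lemma conj_diag_entry P a k : (P *m diag_mx a *m P^T) k k = \sum_j P k j ^+ 2 * a 0 j.
Proof.
rewrite mul_mx_diag mxE; apply: eq_bigr => j _.
by rewrite !mxE expr2 mulrAC.
Qed.

Lemma diag_qf_col Q M k : (Q^T *m M *m Q) k k = ((col k Q)^T *m M *m col k Q) 0 0.
Proof.
rewrite !mxE; apply: eq_bigr => j _; rewrite !mxE; congr (_ * _).
by apply: eq_bigr => i _; rewrite !mxE.
Qed.

Lemma orthmx_col_norm Q k : Q^T *m Q = 1%:M -> ((col k Q)^T *m col k Q) 0 0 = 1.
Proof. by move=> QtQ; rewrite -[(col k Q)^T]mulmx1 -diag_qf_col mulmx1 QtQ mxE eqxx. Qed.

End OrthogonalMatrices.

Section RealSpectralTheorem.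
Variable R : rcfType.

(* For a complex eigenpair (z, v) of A, v A v^H = z (v v^H), where both
   hermitian forms are real and v v^H > 0. *)
Lemma symmetric_eigenvalue_real n (A : 'M[R]_n.+1) : A^T = A -> exists a, eigenvalue A a.
Proof.
move=> sA; pose toC := real_complex R; pose Ac := map_mx toC A.
have [z /eigenvalueP [v vAc v_neq0]] := eigenvalue_closed Ac (ltn0Sn n).
pose q (M : 'M[R[i]]_n.+1) := (v *m M *m (map_mx conjc v)^T) 0 0.
have q_real M : M^T = M -> conjc (q (map_mx toC M)) = q (map_mx toC M).
  move=> sM; pose Mc := map_mx toC M.
  have Mc_conj : map_mx conjc Mc = Mc by apply/matrixP => i j; rewrite !mxE conjc_real.
  have vcK : map_mx conjc (map_mx conjc v)^T = v^T.
    by apply/matrixP => i j; rewrite !mxE conjcK.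
  have tr00 (x : 'M[R[i]]_1) : x 0 0 = x^T 0 0 by rewrite mxE.
  have conj00 (x : 'M[R[i]]_1) : conjc (x 0 0) = (map_mx conjc x) 0 0 by rewrite mxE.
  rewrite /q [RHS]tr00 conj00.
  have McT : Mc^T = Mc by rewrite map_trmx sM.
  by rewrite !map_mxM Mc_conj vcK !trmx_mul trmxK -/Mc McT mulmxA.
have q1_neq0 : q 1%:M != 0.
  apply: contraNneq v_neq0 => /eqP; rewrite /q mulmx1 mxE psumr_eq0 => [/allP v0|j _].
    apply/eqP/rowP => j; have /implyP := v0 j (mem_index_enum j).
    by rewrite !mxE mulf_eq0 conjc_eq0 orbb => /(_ isT)/eqP.
  by rewrite !mxE; exact: mulcJ_ge0.
have qAc : q Ac = z * q 1%:M by rewrite /q mulmx1 vAc -scalemxAl mxE.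
have q1_real : conjc (q 1%:M) = q 1%:M.
  by have := q_real 1%:M (trmx1 _ _); rewrite map_mx1.
have z_real : conjc z = z.
  apply: (mulIf q1_neq0); rewrite -{1}q1_real -rmorphM -qAc; exact: q_real.
have zE : z = toC (complex.Re z).
  by move: z_real; case: (z) => a b /= [] Eb; have -> : b = 0 by lra.
exists (complex.Re z); rewrite eigenvalue_root_char -(fmorph_root toC) map_char_poly.
rewrite [X in root _ X](_ : _ = z); last by rewrite {2}zE.
by rewrite -eigenvalue_root_char; apply/eigenvalueP; exists v.
Qed.

Lemma exists_orthmx_row0 n (u : 'rV[R]_n.+1) :
  u *m u^T = 1%:M -> exists H : 'M[R]_n.+1, H *m H^T = 1%:M /\ 'e_0 *m H = u.
Proof.
move=> uut; set e0 : 'rV[R]_n.+1 := 'e_0; pose h := e0 - u; pose s := (h *m h^T) 0 0.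
have [s0|s_neq0] := eqVneq s 0.
  exists 1%:M; split; first by rewrite trmx1 mulmx1.
  by apply/eqP; rewrite mulmx1 -subr_eq0; apply/eqP/mulmx_trmx_eq0.
have e0_row (v : 'rV[R]_n.+1) : e0 *m v^T = (v 0 0)%:M.
  by rewrite [LHS]mx11_scalar -rowE !mxE.
have s_h0 : s = 2 * h 0 0.
  have ue0 : u *m e0^T = (u 0 0)%:M.
    by rewrite -[u *m _]trmxK trmx_mul trmxK e0_row tr_scalar_mx.
  by rewrite /s /h linearB /= mulmxBr !mulmxBl uut ue0 !e0_row !mxE /= !mulr1n; ring.
pose c := 2 / s; pose P := h^T *m h.
have PP : P *m P = s *: P.
  by rewrite mulmxA -(mulmxA h^T) [h *m h^T]mx11_scalar mul_mx_scalar -scalemxAl.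
have PT : P^T = P by rewrite trmx_mul trmxK.
have e0P : e0 *m P = h 0 0 *: h by rewrite mulmxA e0_row mul_scalar_mx.
clearbody P.
(* the Householder reflection exchanging e_0 and u *)
exists (1%:M - c *: P); split.
  have ccs : c * c * s = c + c by rewrite /c; field.
  rewrite [_^T]linearB /= [(c *: P)^T]linearZ /= PT trmx1 mulmxBr mulmx1 mulmxBl mul1mx.
  by rewrite -scalemxAl -scalemxAr PP !scalerA ccs scalerDl opprB addrK subrK.
have ch0 : c * h 0 0 = 1.
  have h00_neq0 : h 0 0 != 0 by apply: contraNneq s_neq0 => h00; rewrite s_h0 h00 mulr0.
  by rewrite /c s_h0; field.
rewrite mulmxBr mulmx1 -scalemxAr e0P scalerA ch0.
by rewrite scale1r /h opprB addrC subrK.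
Qed.

Lemma symmetric_eigen_row0_block n (B : 'M[R]_(1 + n)) a :
  B^T = B -> ('e_0 : 'rV_(1 + n)) *m B = a *: 'e_0 -> B = block_mx a%:M 0 0 (drsubmx B).
Proof.
move=> BT e0B; have B_row0 j : B 0 (rshift 1 j) = 0.
  have /matrixP/(_ 0 (rshift 1 j)) := e0B.
  by rewrite -rowE !mxE => ->; rewrite mulr0.
have B00 : B 0 0 = a.
  by have /matrixP/(_ 0 0) := e0B; rewrite -rowE !mxE eqxx mulr1.
have l0 : lshift n (0 : 'I_1) = 0 by apply/val_inj.
rewrite -{1}[B]submxK; congr block_mx; apply/matrixP => i j; rewrite !mxE ?ord1 ?l0.
- by rewrite B00 eqxx.
- exact: B_row0.
- by rewrite -BT mxE B_row0.
Qed.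

Theorem symmetric_orthmx_diag n (A : 'M[R]_n) : A^T = A ->
  exists Q : 'M[R]_n, Q *m Q^T = 1%:M /\ is_diag_mx (Q *m A *m Q^T).
Proof.
elim: n A => [|n IHn] A AT.
  by exists 1%:M; rewrite trmx1 mulmx1 [_ *m _]flatmx0 mx0_is_diag.
have [a /eigenvalueP [w wA w_neq0]] := symmetric_eigenvalue_real AT.
pose r := (w *m w^T) 0 0.
have r_gt0 : 0 < r.
  by rewrite lt_def mulmx_trmx_ge0 andbT; apply: contraNneq w_neq0 => /mulmx_trmx_eq0 ->.
pose u := (Num.sqrt r)^-1 *: w.
have uut : u *m u^T = 1%:M.
  rewrite linearZ /= -scalemxAl -scalemxAr scalerA [w *m w^T]mx11_scalar scale_scalar_mx -/r.
  by rewrite -expr2 exprVn sqr_sqrtr ?ltW // mulVf ?gt_eqF.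
have [H [HHt e0H]] := exists_orthmx_row0 uut.
pose B : 'M[R]_(1 + n) := H *m A *m H^T.
have BT : B^T = B by rewrite !trmx_mul trmxK AT mulmxA.
have e0B : ('e_0 : 'rV_(1 + n)) *m B = a *: 'e_0.
  have uA : u *m A = a *: u by rewrite -scalemxAl wA !scalerA mulrC.
  by rewrite !mulmxA e0H uA -scalemxAl -e0H -mulmxA HHt mulmx1.
have B'T : (drsubmx B)^T = drsubmx B by rewrite trmx_drsub BT.
have [Q' [Q'Q't Q'_diag]] := IHn _ B'T.
pose P : 'M[R]_(1 + n) := block_mx 1%:M 0 0 Q'.
have PtE : P^T = block_mx 1%:M 0 0 Q'^T by rewrite tr_block_mx trmx1 !trmx0.
have PPt : P *m P^T = 1%:M.
  rewrite PtE mulmx_block !mulmx0 !mul0mx !addr0 !add0r mulmx1 Q'Q't.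
  exact/esym/scalar_mx_block.
have PBPt : P *m B *m P^T = block_mx a%:M 0 0 (Q' *m drsubmx B *m Q'^T).
  rewrite {1}(symmetric_eigen_row0_block BT e0B) PtE !mulmx_block.
  by rewrite !mulmx0 !mul0mx !addr0 !add0r mul1mx !mulmx1 mul0mx.
exists (P *m H); split.
  by rewrite trmx_mul mulmxA -(mulmxA P) HHt mulmx1.
have -> : P *m H *m A *m (P *m H)^T = P *m B *m P^T by rewrite trmx_mul !mulmxA.
suff : is_diag_mx (P *m B *m P^T) by []. (* retyped at 'M_(1 + n) *)
by rewrite PBPt is_diag_block_mx // !eqxx mx11_is_diag Q'_diag.
Qed.
End RealSpectralTheorem.

Section SpectralCalculus.
Variables (R : realType) (d : nat).
Implicit Types (M N W : 'M[R]_d) (P Q K : 'M[R]_d) (v : 'rV[R]_d).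

Lemma spec_dec_exists M : symmetric_mx M -> exists p, spec_dec M p.
Proof.
move=> MT; have [Q [QQt /diag_mxP [v Q_diag]]] := symmetric_orthmx_diag MT.
have QtQ := mulmx1C QQt.
exists (Q^T, v); split; rewrite /= trmxK //.
by rewrite -Q_diag !mulmxA QtQ mul1mx -mulmxA QtQ mulmx1.
Qed.

Definition spectral_pair M := epsilon (inhabits (1%:M, 0)) (spec_dec M).

Lemma spectral_pairP M p : spec_dec M p -> spec_dec M (spectral_pair M).
Proof. by move=> Mp; apply: epsilon_spec; exists p. Qed.

Lemma mx_funE f M : mx_fun f M =
  (spectral_pair M).1 *m diag_mx (map_mx f (spectral_pair M).2) *m (spectral_pair M).1^T.
Proof. by []. Qed.

Lemma spec_dec_diag M p : spec_dec M p -> p.1^T *m M *m p.1 = diag_mx p.2.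
Proof. by case=> /mulmx1C PtP ->; rewrite conj_diagK. Qed.

(* The squared entries of the orthogonal change of basis [C] between two
   spectral decompositions form a doubly stochastic matrix, and [C i j] can
   only be nonzero when the i-th and j-th eigenvalues coincide. *)
Lemma spec_dec_sum_eq (f : R -> R) M p q : spec_dec M p -> spec_dec M q ->
  \sum_j f (p.2 0 j) = \sum_j f (q.2 0 j).
Proof.
move=> Mp Mq; pose C := p.1^T *m q.1.
have CCt : C *m C^T = 1%:M.
  rewrite trmx_mul trmxK mulmxA -(mulmxA _ q.1) Mq.1 mulmx1; exact: mulmx1C Mp.1.
have diagC : diag_mx p.2 *m C = C *m diag_mx q.2.
  rewrite -(spec_dec_diag Mp) -(spec_dec_diag Mq) /C !mulmxA -(mulmxA _ p.1) Mp.1 mulmx1.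
  by rewrite -!mulmxA (mulmxA q.1) Mq.1 mul1mx.
have C_eig i j : C i j != 0 -> p.2 0 i = q.2 0 j.
  move=> Cij; apply: (mulIf Cij); have /matrixP/(_ i j) := diagC.
  by rewrite mul_diag_mx mul_mx_diag !mxE => ->; rewrite mulrC.
transitivity (\sum_i \sum_j C i j ^+ 2 * f (p.2 0 i)).
  by apply: eq_bigr => i _; rewrite -mulr_suml orthmx_sqr_row_sum // mul1r.
transitivity (\sum_i \sum_j C i j ^+ 2 * f (q.2 0 j)).
  apply: eq_bigr => i _; apply: eq_bigr => j _.
  by have [->|/C_eig ->] := eqVneq (C i j) 0; rewrite ?expr0n ?mul0r.
by rewrite exchange_big; apply: eq_bigr => j _; rewrite -mulr_suml orthmx_sqr_col_sum // mul1r.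
Qed.

Lemma frob_conj_diag P v : P^T *m P = 1%:M ->
  frob (P *m diag_mx v *m P^T) ^+ 2 = \sum_j v 0 j ^+ 2.
Proof.
move=> PtP; rewrite sqr_sqrtr; last first.
  by apply: sumr_ge0 => i _; apply: sumr_ge0 => j _; exact: sqr_ge0.
transitivity (\tr (P *m diag_mx v *m P^T *m (P *m diag_mx v *m P^T)^T)).
  apply: eq_bigr => i _; rewrite [in RHS]mxE; apply: eq_bigr => j _.
  by rewrite [_^T j i]mxE expr2.
rewrite trmx_conj_diag mul_conj_diag // mxtrace_mulC mulmxA PtP mul1mx.
by apply: eq_bigr => j _; rewrite !mxE eqxx mulr1n expr2.
Qed.

Lemma spd_spectrum_gt0 M p : spd M -> spec_dec M p -> forall j, 0 < p.2 0 j.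
Proof.
move=> [_ M_pos] Mp j; have PtP := mulmx1C Mp.1.
have /matrixP/(_ j j) := spec_dec_diag Mp; rewrite diag_qf_col [diag_mx _ _ _]mxE eqxx mulr1n => <-.
apply: M_pos; apply: contra_eq_neq (orthmx_col_norm j PtP) => ->.
by rewrite mulmx0 mxE eq_sym oner_neq0.
Qed.

Lemma trmx_mx_fun f M : (mx_fun f M)^T = mx_fun f M.
Proof. exact: trmx_conj_diag. Qed.

Lemma mx_funM f g M : symmetric_mx M ->
  mx_fun f M *m mx_fun g M = mx_fun (fun x => f x * g x) M.
Proof.
move=> /spec_dec_exists [p /spectral_pairP Mp].
rewrite !mx_funE mul_conj_diag ?(mulmx1C Mp.1) //.
by congr (_ *m diag_mx _ *m _); apply/rowP => j; rewrite !mxE.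
Qed.

Lemma mx_fun_id M : symmetric_mx M -> mx_fun id M = M.
Proof.
move=> /spec_dec_exists [p /spectral_pairP Mp]; rewrite mx_funE [in RHS]Mp.2.
by congr (_ *m diag_mx _ *m _); apply/rowP => j; rewrite mxE.
Qed.

Lemma mx_fun_cst c M : symmetric_mx M -> mx_fun (fun=> c) M = c%:M.
Proof.
move=> /spec_dec_exists [p /spectral_pairP Mp]; rewrite mx_funE -(conj_diag_const c Mp.1).
by congr (_ *m diag_mx _ *m _); apply/rowP => j; rewrite !mxE.
Qed.

Lemma eq_mx_fun f g M : spd M -> {in Num.pos, f =1 g} -> mx_fun f M = mx_fun g M.
Proof.
move=> sM fg; have [p /spectral_pairP Mp] := spec_dec_exists sM.1.
rewrite !mx_funE; congr (_ *m diag_mx _ *m _); apply/rowP => j; rewrite !mxE fg //.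
by rewrite posrE (spd_spectrum_gt0 sM Mp).
Qed.

Local Notation sqrtm M := (mx_fun Num.sqrt M).

Lemma sqrtm_invsqrtm M : spd M -> sqrtm M *m invsqrtm M = 1%:M.
Proof.
move=> sM; have MT := sM.1; rewrite mx_funM // -(mx_fun_cst 1 MT); apply: eq_mx_fun => // x x_gt0.
by rewrite mulfV // sqrtr_eq0 -ltNge.
Qed.

Lemma sqrtm_sqr M : spd M -> sqrtm M *m sqrtm M = M.
Proof.
move=> sM; have MT := sM.1; rewrite mx_funM // -{2}(mx_fun_id MT); apply: eq_mx_fun => // x x_gt0.
by rewrite -expr2 sqr_sqrtr ?ltW.
Qed.

Lemma invsqrtm_sqr_mul M : spd M -> invsqrtm M *m invsqrtm M *m M = 1%:M.
Proof.
move=> sM; have MT := sM.1; rewrite -{3}(mx_fun_id MT) !mx_funM // -(mx_fun_cst 1 MT).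
apply: eq_mx_fun => // x x_gt0; rewrite -invfM -expr2 sqr_sqrtr ?ltW // mulVf //.
by rewrite gt_eqF.
Qed.

Lemma invsqrtm_conj M : spd M -> invsqrtm M *m M *m invsqrtm M = 1%:M.
Proof. by move=> sM; apply: mulmx1C; rewrite mulmxA invsqrtm_sqr_mul. Qed.

Lemma spd_congr W K : spd W -> K \in unitmx -> spd (K^T *m W *m K).
Proof.
move=> [WT W_pos] K_unit; split; first by rewrite /symmetric_mx !trmx_mul trmxK WT mulmxA.
move=> x x_neq0.
have -> : x^T *m (K^T *m W *m K) *m x = (K *m x)^T *m W *m (K *m x) by rewrite trmx_mul !mulmxA.
apply: W_pos.
by apply: contra_neq x_neq0 => /(congr1 (mulmx (invmx K))); rewrite mulKmx // mulmx0.
Qed.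

Lemma invsqrtm_unit M : spd M -> invsqrtm M \in unitmx.
Proof. by move=> sM; have [] := mulmx1_unit (sqrtm_invsqrtm sM). Qed.

Lemma spec_dec_trmx_mul K Q v : (forall j, 0 < v 0 j) -> spec_dec (K *m K^T) (Q, v) ->
  spec_dec (K^T *m K) (K^T *m Q *m diag_mx (\row_j (Num.sqrt (v 0 j))^-1), v).
Proof.
move=> v_gt0 [/= QQt KKt]; have QtQ := mulmx1C QQt.
set D := diag_mx _.
have DvD : D *m diag_mx v *m D = 1%:M.
  rewrite !mulmx_diag -diag_const_mx; congr diag_mx; apply/rowP => j; rewrite !mxE.
  by rewrite mulrAC -expr2 exprVn sqr_sqrtr ?ltW // mulVf ?gt_eqF.
have DT : D^T = D by rewrite tr_diag_mx.
have V_orth : (K^T *m Q *m D)^T *m (K^T *m Q *m D) = 1%:M.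
  rewrite !trmx_mul trmxK DT !mulmxA -(mulmxA _ K) KKt -(mulmxA D) -(mulmxA D) conj_diagK //.
split; first exact: mulmx1C.
rewrite /= !trmx_mul trmxK DT !mulmxA.
have -> : K^T *m Q *m D *m diag_mx v *m D = K^T *m Q *m (D *m diag_mx v *m D) by rewrite !mulmxA.
by rewrite DvD mulmx1 -(mulmxA _ Q) QQt mulmx1.
Qed.

Lemma spec_dec_inv M N P v : spec_dec M (P, v) -> M *m N = 1%:M ->
  (forall j, v 0 j != 0) -> spec_dec N (P, \row_j (v 0 j)^-1).
Proof.
move=> [/= PPt Mdec] MN v_neq0; split => //=.
set Z := P *m diag_mx _ *m P^T.
have MZ : M *m Z = 1%:M.
  rewrite Mdec mul_conj_diag; last exact: mulmx1C.
  rewrite -(conj_diag_const 1 PPt); congr (_ *m diag_mx _ *m _).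
  by apply/rowP => j; rewrite !mxE mulfV.
by rewrite -[N]mulmx1 -MZ mulmxA (mulmx1C MN) mul1mx.
Qed.

Lemma deltaR_sqr_spectral W X q : spd W -> spd X ->
  spec_dec (invsqrtm X *m W *m invsqrtm X) q -> deltaR W X ^+ 2 = \sum_j ln (q.2 0 j) ^+ 2.
Proof.
(* W^{-1/2} X W^{-1/2} is the inverse of K^T K, whose spectrum is that of
   K K^T = X^{-1/2} W X^{-1/2}. *)
case: q => Q v sW sX Yq.
have := invsqrtm_sqr_mul sX; have := invsqrtm_unit sX.
have : (invsqrtm X)^T = invsqrtm X := trmx_mx_fun _ _.
move: (invsqrtm X) Yq => S Yq ST S_unit SSX.
have v_gt0 : forall j, 0 < v 0 j.
  by apply: (spd_spectrum_gt0 _ Yq); rewrite -{1}ST; exact: spd_congr.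
pose K := S *m sqrtm W.
have KKt : K *m K^T = S *m W *m S.
  by rewrite /K trmx_mul ST trmx_mx_fun mulmxA -(mulmxA S) sqrtm_sqr.
have KtK_inv : K^T *m K *m (invsqrtm W *m X *m invsqrtm W) = 1%:M.
  rewrite /K trmx_mul ST trmx_mx_fun.
  have -> : sqrtm W *m S *m (S *m sqrtm W) *m (invsqrtm W *m X *m invsqrtm W)
          = sqrtm W *m (S *m S *m (sqrtm W *m invsqrtm W) *m X) *m invsqrtm W.
    by rewrite !mulmxA.
  by rewrite sqrtm_invsqrtm // mulmx1 SSX mulmx1 sqrtm_invsqrtm.
rewrite -KKt in Yq.
have Y1_dec := spec_dec_inv (spec_dec_trmx_mul v_gt0 Yq) KtK_inv (fun j => lt0r_neq0 (v_gt0 j)).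
rewrite /deltaR /logm mx_funE frob_conj_diag; last exact: mulmx1C (spectral_pairP Y1_dec).1.
under eq_bigr do rewrite mxE.
rewrite (spec_dec_sum_eq (fun x => ln x ^+ 2) (spectral_pairP Y1_dec) Y1_dec) /=.
by apply: eq_bigr => j _; rewrite mxE lnV ?sqrrN ?posrE.
Qed.

End SpectralCalculus.

Section OperatorInterval.
Variables (R : realType) (d : nat).
Implicit Types (W X Y A B K Q : 'M[R]_d).

Lemma psd_congr W K : psd W -> psd (K^T *m W *m K).
Proof.
move=> [WT W_ge0]; split; first by rewrite /symmetric_mx !trmx_mul trmxK WT mulmxA.
move=> x; have -> : x^T *m (K^T *m W *m K) *m x = (K *m x)^T *m W *m (K *m x).
  by rewrite trmx_mul !mulmxA.
exact: W_ge0.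
Qed.

Lemma spd_convex A B t : spd A -> spd B -> 0 <= t <= 1 -> spd ((1 - t) *: A + t *: B).
Proof.
move=> [AT A_pos] [BT B_pos] /andP[t0 t1]; split.
  by rewrite /symmetric_mx linearD /= !linearZ /= AT BT.
move=> x x_neq0; rewrite mulmxDr mulmxDl -!scalemxAr -!scalemxAl.
have entry (a b : R) (M N : 'M[R]_1) : (a *: M + b *: N) 0 0 = a * M 0 0 + b * N 0 0.
  by rewrite !mxE.
rewrite entry.
have := A_pos x x_neq0; have := B_pos x x_neq0; nra.
Qed.

Lemma spd_le1_qf Y (x : 'cV[R]_d) : spd Y -> loewner_le Y 1%:M -> (x^T *m x) 0 0 = 1 ->
  0 < (x^T *m Y *m x) 0 0 <= 1.
Proof.
move=> [_ Y_pos] [_ IY_ge0] xtx; apply/andP; split.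
  by apply: Y_pos; apply: contra_eq_neq xtx => ->; rewrite mulmx0 mxE eq_sym oner_neq0.
have entryB (M N : 'M[R]_1) : (M - N) 0 0 = M 0 0 - N 0 0 by rewrite !mxE.
by have := IY_ge0 x; rewrite mulmxBr mulmxBl mulmx1 entryB xtx subr_ge0.
Qed.

Lemma spd_le1_diag Y Q k : spd Y -> loewner_le Y 1%:M -> Q^T *m Q = 1%:M ->
  0 < (Q^T *m Y *m Q) k k <= 1.
Proof. by move=> sY leY QtQ; rewrite diag_qf_col spd_le1_qf // orthmx_col_norm. Qed.

Lemma spd_le1_spectrum Y p : spd Y -> loewner_le Y 1%:M -> spec_dec Y p ->
  forall j, 0 < p.2 0 j <= 1.
Proof.
move=> sY leY Yp j; have /matrixP/(_ j j) := spec_dec_diag Yp.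
rewrite [diag_mx _ _ _]mxE eqxx mulr1n => <-; exact/spd_le1_diag/mulmx1C/Yp.1.
Qed.

Lemma invsqrtm_conj_spd_le1 W X : spd X -> spd W -> loewner_le W X ->
  spd (invsqrtm X *m W *m invsqrtm X) /\ loewner_le (invsqrtm X *m W *m invsqrtm X) 1%:M.
Proof.
move=> sX sW leWX; have ST : (invsqrtm X)^T = invsqrtm X := trmx_mx_fun _ _.
split; first by rewrite -{1}ST; apply: spd_congr => //; exact: invsqrtm_unit.
rewrite /loewner_le -(invsqrtm_conj sX) -mulmxBl -mulmxBr -{1}ST; exact: psd_congr.
Qed.

End OperatorInterval.

Lemma ln_le_tangent (R : realType) (y m : R) : 0 < y -> 0 < m -> ln y <= ln m + (y / m - 1).
Proof.
move=> y_gt0 m_gt0; have ym_gt0 : 0 < y / m by rewrite divr_gt0.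
rewrite -{1}(divfK (lt0r_neq0 m_gt0) y) mulrC lnM ?posrE // lerD2l.
by rewrite -{1}(subrK 1 (y / m)) addrC le_ln1Dx // ltrBrDl subrr.
Qed.

Section LnSquareConvexity.
Variables (R : realType) (I : finType) (c : I -> R).
Hypotheses (c_ge0 : forall i, 0 <= c i) (c_sum1 : \sum_i c i = 1).

Lemma wmean_gt0 (mu : I -> R) : (forall i, 0 < mu i) -> 0 < \sum_i c i * mu i.
Proof.
move=> mu_gt0; rewrite lt_def sumr_ge0 ?andbT => [|i _]; last exact: mulr_ge0 (ltW _).
apply: contra_eq_neq c_sum1 => /eqP; rewrite psumr_eq0 => [/allP c_mu0|i _]; last first.
  exact: mulr_ge0 (ltW _).
rewrite big1 1?eq_sym ?oner_neq0 // => i _; apply/eqP.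
by have /implyP/(_ isT) := c_mu0 i (mem_index_enum i); rewrite mulf_eq0 (gt_eqF (mu_gt0 i)) orbF.
Qed.

Lemma wmean_le1 (mu : I -> R) : (forall i, mu i <= 1) -> \sum_i c i * mu i <= 1.
Proof. by move=> mu_le1; rewrite -c_sum1; apply: ler_sum => i _; rewrite ler_piMr. Qed.

Lemma ln_jensen (mu : I -> R) : (forall i, 0 < mu i) ->
  \sum_i c i * ln (mu i) <= ln (\sum_i c i * mu i).
Proof.
move=> mu_gt0; set m := \sum_i c i * mu i; have m_gt0 : 0 < m := wmean_gt0 mu_gt0.
suff <- : \sum_i c i * (ln m + (mu i / m - 1)) = ln m.
  by apply: ler_sum => i _; apply/ler_wpM2l/ln_le_tangent.
under eq_bigr do rewrite mulrDr mulrBr mulr1 mulrA.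
rewrite big_split sumrB /= -!mulr_suml c_sum1 -/m mulfV ?lt0r_neq0 //.
by rewrite mul1r subrr addr0.
Qed.

(* ln^2 is convex on (0, 1]: Jensen for the concave ln, then for the square,
   using that ln of the mean is nonpositive *)
Lemma ln_sqr_jensen (mu : I -> R) : (forall i, 0 < mu i <= 1) ->
  ln (\sum_i c i * mu i) ^+ 2 <= \sum_i c i * ln (mu i) ^+ 2.
Proof.
move=> mu01; have mu_gt0 i : 0 < mu i by case/andP: (mu01 i).
have mu_le1 i : mu i <= 1 by case/andP: (mu01 i).
set L := \sum_i c i * ln (mu i); set m := \sum_i c i * mu i.
have L_le : L <= ln m := ln_jensen mu_gt0.
have lnm_le0 : ln m <= 0 := ln_le0 (wmean_le1 mu_le1).
have var_eq : \sum_i c i * (ln (mu i) - L) ^+ 2 = \sum_i c i * ln (mu i) ^+ 2 - L ^+ 2.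
  transitivity (\sum_i c i * ln (mu i) ^+ 2 - (L *+ 2) * L + L ^+ 2 * \sum_i c i).
    rewrite {3}/L !mulr_sumr -sumrB -big_split /=; apply: eq_bigr => i _; ring.
  by rewrite c_sum1; ring.
have : 0 <= \sum_i c i * (ln (mu i) - L) ^+ 2.
  by apply: sumr_ge0 => i _; rewrite mulr_ge0 ?sqr_ge0.
rewrite var_eq; nra.
Qed.

End LnSquareConvexity.

Lemma ln_sqr_convex (R : realType) (t x y : R) : 0 <= t <= 1 -> 0 < x <= 1 -> 0 < y <= 1 ->
  ln ((1 - t) * x + t * y) ^+ 2 <= (1 - t) * ln x ^+ 2 + t * ln y ^+ 2.
Proof.
move=> /andP[t0 t1] x01 y01.
pose c (b : bool) := if b then t else 1 - t; pose mu (b : bool) := if b then y else x.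
have c_ge0 b : 0 <= c b by case: b => //=; rewrite subr_ge0.
have c_sum1 : \sum_b c b = 1 by rewrite big_bool /= addrC subrK.
have mu01 b : 0 < mu b <= 1 by case: b.
have := ln_sqr_jensen c_ge0 c_sum1 mu01; rewrite !big_bool /=.
by rewrite addrC [X in _ <= X]addrC.
Qed.

Section TraceLnSquare.
Variables (R : realType) (d : nat).
Implicit Types (Y Q : 'M[R]_d).

(* Peierls' inequality for ln^2: with C := Q^T p.1 orthogonal, the diagonal of
   Q^T Y Q is obtained from the spectrum by the doubly stochastic matrix of
   the squared entries of C. *)
Lemma sum_ln_sqr_diag_le Y Q p : spd Y -> loewner_le Y 1%:M -> spec_dec Y p ->
  Q^T *m Q = 1%:M -> \sum_k ln ((Q^T *m Y *m Q) k k) ^+ 2 <= \sum_j ln (p.2 0 j) ^+ 2.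
Proof.
move=> sY leY Yp QtQ; pose C := Q^T *m p.1.
have CCt : C *m C^T = 1%:M.
  by rewrite trmx_mul trmxK mulmxA -(mulmxA _ p.1) Yp.1 mulmx1 QtQ.
have YC : Q^T *m Y *m Q = C *m diag_mx p.2 *m C^T.
  by rewrite {1}Yp.2 /C trmx_mul trmxK !mulmxA.
apply: (le_trans (y := \sum_k \sum_j C k j ^+ 2 * ln (p.2 0 j) ^+ 2)).
  apply: ler_sum => k _; rewrite YC conj_diag_entry.
  apply: ln_sqr_jensen => [j||j]; rewrite ?sqr_ge0 ?orthmx_sqr_row_sum //.
  exact: spd_le1_spectrum sY leY Yp j.
rewrite exchange_big /=; apply: ler_sum => j _.
by rewrite -mulr_suml orthmx_sqr_col_sum // mul1r.
Qed.

Lemma trace_ln_sqr_convex (Ya Yb : 'M[R]_d) t pa pb pg :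
  spd Ya -> loewner_le Ya 1%:M -> spd Yb -> loewner_le Yb 1%:M -> 0 <= t <= 1 ->
  spec_dec Ya pa -> spec_dec Yb pb -> spec_dec ((1 - t) *: Ya + t *: Yb) pg ->
  \sum_j ln (pg.2 0 j) ^+ 2
    <= (1 - t) * \sum_j ln (pa.2 0 j) ^+ 2 + t * \sum_j ln (pb.2 0 j) ^+ 2.
Proof.
move=> sYa leYa sYb leYb t01 Ya_dec Yb_dec Yg_dec; have t_ge0 : 0 <= t by case/andP: t01.
have t_le1 : 0 <= 1 - t by rewrite subr_ge0; case/andP: t01.
pose Q := pg.1; have QtQ : Q^T *m Q = 1%:M := mulmx1C Yg_dec.1.
have pgE k : pg.2 0 k = (1 - t) * (Q^T *m Ya *m Q) k k + t * (Q^T *m Yb *m Q) k k.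
  have /matrixP/(_ k k) := spec_dec_diag Yg_dec; rewrite [diag_mx _ _ _]mxE eqxx mulr1n => <-.
  by rewrite mulmxDr mulmxDl -!scalemxAr -!scalemxAl !mxE.
apply: (le_trans (y := \sum_k ((1 - t) * ln ((Q^T *m Ya *m Q) k k) ^+ 2
                             + t * ln ((Q^T *m Yb *m Q) k k) ^+ 2))).
  by apply: ler_sum => k _; rewrite pgE ln_sqr_convex ?spd_le1_diag.
rewrite big_split /= -!mulr_sumr; apply: lerD; apply: ler_wpM2l => //.
  exact: sum_ln_sqr_diag_le Ya_dec QtQ.
exact: sum_ln_sqr_diag_le Yb_dec QtQ.
Qed.

End TraceLnSquare.

Lemma wsumD (R : realType) d n (B : 'I_n -> 'M[R]_d) (a b : R) (alpha beta : 'rV[R]_n) :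
  wsum B (a *: alpha + b *: beta) = a *: wsum B alpha + b *: wsum B beta.
Proof.
rewrite /wsum !scaler_sumr -big_split; apply: eq_bigr => i _.
by rewrite !mxE scalerDl !scalerA.
Qed.

Unset Implicit Arguments.

Theorem theorem1 (R : realType) (d n : nat) (X : 'M[R]_d) (B : 'I_n -> 'M[R]_d) :
  spd X -> (forall i, spd (B i)) ->
  forall (alpha beta : 'rV[R]_n) (t : R),
    setA B X alpha -> setA B X beta -> 0 <= t -> t <= 1 ->
    phi B X ((1 - t) *: alpha + t *: beta)
      <= (1 - t) * phi B X alpha + t * phi B X beta.
Proof.
move=> sX _ alpha beta t [leWa [_ sWa]] [leWb [_ sWb]] t0 t1.
have t01 : 0 <= t <= 1 by rewrite t0 t1.
rewrite /phi wsumD.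
move: (wsum B alpha) (wsum B beta) leWa sWa leWb sWb => Wa Wb leWa sWa leWb sWb.
have [sYa leYa] := invsqrtm_conj_spd_le1 sX sWa leWa.
have [sYb leYb] := invsqrtm_conj_spd_le1 sX sWb leWb.
have YgE : invsqrtm X *m ((1 - t) *: Wa + t *: Wb) *m invsqrtm X
    = (1 - t) *: (invsqrtm X *m Wa *m invsqrtm X) + t *: (invsqrtm X *m Wb *m invsqrtm X).
  by rewrite mulmxDr mulmxDl -!scalemxAr -!scalemxAl.
have [pa Ya_dec] := spec_dec_exists sYa.1.
have [pb Yb_dec] := spec_dec_exists sYb.1.
have [pg Yg_dec] : exists pg, spec_dec (invsqrtm X *m ((1 - t) *: Wa + t *: Wb) *m invsqrtm X) pg.
  by apply: spec_dec_exists; rewrite YgE; exact: (spd_convex sYa sYb t01).1.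
rewrite (deltaR_sqr_spectral (spd_convex sWa sWb t01) sX Yg_dec).
rewrite (deltaR_sqr_spectral sWa sX Ya_dec) (deltaR_sqr_spectral sWb sX Yb_dec).
by apply: (trace_ln_sqr_convex sYa leYa sYb leYb t01 Ya_dec Yb_dec); rewrite -YgE.
Qed.
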